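(* For every $\epsilon>0$ there exist a smooth strictly subharmonic function $\phi^\epsilon$ on $\mathbb{C}$ and constants $\delta_1,\delta_2,r>0$ such that: (1) $\phi^\epsilon=(1-\delta_1)\phi-\delta_2$ on the ball $B_r=\{|z|<r\}$; (2) $\phi^\epsilon=\psi$ for $|z|>1$; (3) $\|\phi^\epsilon-\psi\|_{C^2}<\epsilon$.
   Context: Let $\phi$ be a smooth strictly subharmonic ($\Delta\phi>0$) real function on $\mathbb{C}$ with $\phi(z)=|z|^2+o(|z|^2)$ as $z\to0$. Let $\psi$ be a smooth strictly subharmonic real function on $\mathbb{C}$ with the following properties: - $\psi$ is $S^1$-invariant, i.e. $\psi(e^{is}z)=\psi(z)$; - $\psi(z)=|z|^2$ on the unit disc; - $\psi-\log(1+|z|^2)$ extends to a smooth function at $\infty\in\mathbb{P}^1$. The norm $\|\cdot\|_{C^2}$ is the supremum over $\mathbb{C}$ of the absolute values of all partial derivatives of order at most $2$. *)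

(* concrete reals R, Coquelicot for derivatives/continuity.
   The complex plane C is modelled as R x R, a function on C as f : R -> R -> R. *)
From Stdlib Require Import Reals List.
From Coquelicot Require Import Coquelicot.
Open Scope R_scope.

Definition partial (b : bool) (f : R -> R -> R) : R -> R -> R :=
  if b then fun x y => Derive (fun t => f t y) x
  else fun x y => Derive (fun t => f x t) y.

Fixpoint pd (l : list bool) (f : R -> R -> R) : R -> R -> R :=
  match l with
  | nil => f
  | b :: l' => partial b (pd l' f)
  end.

Definition smooth (f : R -> R -> R) : Prop :=
  forall (l : list bool) (x y : R),
    ex_derive (fun t => pd l f t y) x /\
    ex_derive (fun t => pd l f x t) y /\
    continuous (fun p : R * R => pd l f (fst p) (snd p)) (x, y).

Definition laplacian (f : R -> R -> R) (x y : R) : R :=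
  pd (true :: true :: nil) f x y + pd (false :: false :: nil) f x y.

Definition strictly_subharmonic (f : R -> R -> R) : Prop :=
  smooth f /\ forall x y, 0 < laplacian f x y.

Definition norm2 (x y : R) : R := x ^ 2 + y ^ 2.

Definition C2_norm_lt (f : R -> R -> R) (eps : R) : Prop :=
  exists M, M < eps /\
    forall (l : list bool) (x y : R), (length l <= 2)%nat -> Rabs (pd l f x y) <= M.

Definition S1_invariant (f : R -> R -> R) : Prop :=
  forall s x y, f (x * cos s - y * sin s) (x * sin s + y * cos s) = f x y.

(* f - log(1+|z|^2) extends to a smooth function at infinity in P^1:
   in the chart w = 1/z, w <> 0 ↦ f(1/w) - log(1 + |1/w|^2) extends to a smooth
   function on C *)
Definition extends_smooth_at_infinity (f : R -> R -> R) : Prop :=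
  exists h : R -> R -> R, smooth h /\
    forall u v, norm2 u v <> 0 ->
      h u v = f (u / norm2 u v) (- v / norm2 u v) - ln (1 + / norm2 u v).

From Stdlib Require Import Reals List Lra Lia FunctionalExtensionality.
From Coquelicot Require Import Coquelicot.
Open Scope R_scope.

(* Take [phi^eps = psi + chi(|z|^2/rho^2) ((1 - tau)(phi - |z|^2) - tau |z|^2 - tau rho^2)]
   with a smooth cutoff [chi] equal to [1] on [(-oo, 1]] and to [0] on [[2, +oo)].  As
   [psi = |z|^2] on the unit disc, this is [(1 - tau) phi - tau rho^2] on [B_rho] and [psi]
   outside [B_(2 rho)].  Since [q = phi - |z|^2] is smooth and [o(|z|^2)], its 2-jet vanishes
   at [0]; hence [|D^k q| <= tau |z|^(2-k)] on [B_(2 rho)] for [rho] small, which absorbs the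
   factors [rho^-k] produced by differentiating the cutoff: the correction is [O(tau)] in [C^2]
   uniformly in [rho].  Small [tau] then gives (3) and [Delta phi^eps >= 4 - O(tau) > 0] on
   the unit disc, while outside it [phi^eps = psi]. *)

Definition pdiff (f : R -> R -> R) : Prop := forall x y,
  ex_derive (fun t => f t y) x /\ ex_derive (fun t => f x t) y /\
  continuous (fun p : R * R => f (fst p) (snd p)) (x, y).

Definition smooth_upto (n : nat) (f : R -> R -> R) : Prop :=
  forall l, (length l <= n)%nat -> pdiff (pd l f).

Lemma smooth_iff_upto f : smooth f <-> forall n, smooth_upto n f.
Proof.
  split.
  - intros H n l _ x y. apply H.
  - intros H l x y. apply (H (length l) l (le_n _)).
Qed.

Lemma pd_app l b f : pd (l ++ b :: nil) f = pd l (partial b f).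
Proof. induction l; simpl; congruence. Qed.

Lemma smooth_upto_pdiff n f : smooth_upto n f -> pdiff f.
Proof. intros H; apply (H nil); simpl; lia. Qed.

Lemma smooth_upto_weaken n f : smooth_upto (S n) f -> smooth_upto n f.
Proof. intros H l Hl; apply H; lia. Qed.

Lemma smooth_upto_partial n b f : smooth_upto (S n) f -> smooth_upto n (partial b f).
Proof. intros H l Hl. rewrite <- pd_app. apply H. rewrite length_app; simpl; lia. Qed.

Lemma smooth_upto0 f : pdiff f -> smooth_upto 0 f.
Proof. intros H l Hl. destruct l; [exact H | simpl in Hl; lia]. Qed.

Lemma smooth_upto_succ f n : pdiff f -> (forall b, smooth_upto n (partial b f)) ->
  smooth_upto (S n) f.
Proof.
  intros Hf H l Hl. destruct l as [|b l] using rev_ind.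
  - exact Hf.
  - rewrite pd_app. apply H. rewrite length_app in Hl; simpl in Hl; lia.
Qed.

Lemma pdiff_plus f g : pdiff f -> pdiff g -> pdiff (fun x y => f x y + g x y).
Proof.
  intros Hf Hg x y. destruct (Hf x y) as [fx [fy fc]], (Hg x y) as [gx [gy gc]].
  split; [|split].
  - apply (ex_derive_plus (fun t => f t y) (fun t => g t y)); auto.
  - apply (ex_derive_plus (fun t => f x t) (fun t => g x t)); auto.
  - apply (continuous_plus (fun p : R * R => f (fst p) (snd p))
                           (fun p : R * R => g (fst p) (snd p))); auto.
Qed.

Lemma pdiff_mult f g : pdiff f -> pdiff g -> pdiff (fun x y => f x y * g x y).
Proof.
  intros Hf Hg x y. destruct (Hf x y) as [fx [fy fc]], (Hg x y) as [gx [gy gc]].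
  split; [|split].
  - apply (ex_derive_mult (fun t => f t y) (fun t => g t y)); auto.
  - apply (ex_derive_mult (fun t => f x t) (fun t => g x t)); auto.
  - apply (continuous_mult (fun p : R * R => f (fst p) (snd p))
                           (fun p : R * R => g (fst p) (snd p))); auto.
Qed.

Lemma partial_plus b f g : pdiff f -> pdiff g ->
  partial b (fun x y => f x y + g x y) = (fun x y => partial b f x y + partial b g x y).
Proof.
  intros Hf Hg. destruct b; apply functional_extensionality; intro x;
    apply functional_extensionality; intro y; simpl.
  - exact (Derive_plus _ _ x (proj1 (Hf x y)) (proj1 (Hg x y))).
  - exact (Derive_plus _ _ y (proj1 (proj2 (Hf x y))) (proj1 (proj2 (Hg x y)))).
Qed.

Lemma partial_mult b f g : pdiff f -> pdiff g ->
  partial b (fun x y => f x y * g x y) =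
  (fun x y => partial b f x y * g x y + f x y * partial b g x y).
Proof.
  intros Hf Hg. destruct b; apply functional_extensionality; intro x;
    apply functional_extensionality; intro y; simpl.
  - exact (Derive_mult _ _ x (proj1 (Hf x y)) (proj1 (Hg x y))).
  - exact (Derive_mult _ _ y (proj1 (proj2 (Hf x y))) (proj1 (proj2 (Hg x y)))).
Qed.

Lemma smooth_upto_plus n : forall f g,
  smooth_upto n f -> smooth_upto n g -> smooth_upto n (fun x y => f x y + g x y).
Proof.
  induction n; intros f g Hf Hg;
    pose proof (smooth_upto_pdiff _ _ Hf); pose proof (smooth_upto_pdiff _ _ Hg).
  - apply smooth_upto0, pdiff_plus; auto.
  - apply smooth_upto_succ; [apply pdiff_plus; auto|].
    intro b. rewrite partial_plus by auto. apply IHn; apply smooth_upto_partial; auto.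
Qed.

Lemma smooth_upto_mult n : forall f g,
  smooth_upto n f -> smooth_upto n g -> smooth_upto n (fun x y => f x y * g x y).
Proof.
  induction n; intros f g Hf Hg;
    pose proof (smooth_upto_pdiff _ _ Hf); pose proof (smooth_upto_pdiff _ _ Hg).
  - apply smooth_upto0, pdiff_mult; auto.
  - apply smooth_upto_succ; [apply pdiff_mult; auto|].
    intro b. rewrite partial_mult by auto.
    apply smooth_upto_plus; apply IHn;
      auto using smooth_upto_partial, smooth_upto_weaken.
Qed.

Lemma pdiff_const c : pdiff (fun _ _ => c).
Proof. intros x y; repeat split; auto using ex_derive_const, continuous_const. Qed.

Lemma partial_const b c : partial b (fun _ _ => c) = (fun _ _ => 0).
Proof. destruct b; do 2 (apply functional_extensionality; intro); simpl; apply Derive_const. Qed.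

Lemma smooth_upto_const n : forall c, smooth_upto n (fun _ _ => c).
Proof.
  induction n; intro c; [apply smooth_upto0, pdiff_const|].
  apply smooth_upto_succ; [apply pdiff_const|]. intro b; rewrite partial_const; auto.
Qed.

Lemma smooth_plus f g : smooth f -> smooth g -> smooth (fun x y => f x y + g x y).
Proof. rewrite !smooth_iff_upto; intros; apply smooth_upto_plus; auto. Qed.

Lemma smooth_mult f g : smooth f -> smooth g -> smooth (fun x y => f x y * g x y).
Proof. rewrite !smooth_iff_upto; intros; apply smooth_upto_mult; auto. Qed.

Lemma smooth_const c : smooth (fun _ _ => c).
Proof. apply smooth_iff_upto; intro; apply smooth_upto_const. Qed.

Lemma smooth_partial b f : smooth f -> smooth (partial b f).
Proof. rewrite !smooth_iff_upto; intros H n; apply smooth_upto_partial; auto. Qed.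

Lemma smooth_pdiff_pd l f : smooth f -> pdiff (pd l f).
Proof. intros H x y; apply H. Qed.

Lemma smooth_pdiff f : smooth f -> pdiff f.
Proof. exact (smooth_pdiff_pd nil f). Qed.

Lemma smooth_ext f g : (forall x y, f x y = g x y) -> smooth f -> smooth g.
Proof.
  intros H. replace g with f; [auto|]. do 2 (apply functional_extensionality; intro). apply H.
Qed.

Lemma smooth_scal a f : smooth f -> smooth (fun x y => a * f x y).
Proof. intros; apply (smooth_mult (fun _ _ => a) f); auto using smooth_const. Qed.

Lemma smooth_minus f g : smooth f -> smooth g -> smooth (fun x y => f x y - g x y).
Proof.
  intros Hf Hg. apply (smooth_ext (fun x y => f x y + -1 * g x y)); [intros; ring|].
  apply (smooth_plus f (fun x y => -1 * g x y)); auto using smooth_scal.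
Qed.

Definition coord (b : bool) (x y : R) : R := if b then x else y.

Lemma smooth_upto_coord n b : smooth_upto n (coord b).
Proof.
  assert (H : pdiff (coord b)).
  { intros x y; unfold coord; destruct b; (split; [|split]).
    - apply ex_derive_id.
    - apply ex_derive_const.
    - apply continuous_fst.
    - apply ex_derive_const.
    - apply ex_derive_id.
    - apply continuous_snd. }
  destruct n; [apply smooth_upto0, H|]. apply smooth_upto_succ; [exact H|].
  intro b'. replace (partial b' (coord b))
    with (fun _ _ : R => if Bool.eqb b b' then 1 else 0); [apply smooth_upto_const|].
  destruct b, b'; do 2 (apply functional_extensionality; intro); simpl; symmetry;
    first [apply Derive_id | apply Derive_const].
Qed.

Lemma smooth_coord b : smooth (coord b).
Proof. apply smooth_iff_upto; intro n; apply smooth_upto_coord. Qed.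

Definition smooth1 (g : R -> R) : Prop := smooth (fun x (_ : R) => g x).

Lemma smooth1_ex_derive g : smooth1 g -> forall x, ex_derive g x.
Proof. intros H x. exact (proj1 (smooth_pdiff _ H x 0)). Qed.

Lemma smooth1_Derive g : smooth1 g -> smooth1 (Derive g).
Proof. exact (smooth_partial true _). Qed.

Lemma smooth1_continuous g : smooth1 g -> forall x, continuous g x.
Proof.
  intros H x. apply (ex_derive_continuous (K := R_AbsRing) (V := R_NormedModule)).
  apply smooth1_ex_derive, H.
Qed.

Lemma pdiff_comp g u : smooth1 g -> pdiff u -> pdiff (fun x y => g (u x y)).
Proof.
  intros Hg Hu x y. destruct (Hu x y) as [ux [uy uc]]. split; [|split].
  - apply (ex_derive_comp g (fun t => u t y)); auto using smooth1_ex_derive.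
  - apply (ex_derive_comp g (fun t => u x t)); auto using smooth1_ex_derive.
  - apply (continuous_comp (fun p : R * R => u (fst p) (snd p)) g); auto.
    apply smooth1_continuous, Hg.
Qed.

Lemma partial_comp b g u : smooth1 g -> pdiff u ->
  partial b (fun x y => g (u x y)) = (fun x y => Derive g (u x y) * partial b u x y).
Proof.
  intros Hg Hu. destruct b; apply functional_extensionality; intro x;
    apply functional_extensionality; intro y; simpl; rewrite Rmult_comm.
  - exact (Derive_comp g (fun t => u t y) x (smooth1_ex_derive _ Hg _) (proj1 (Hu x y))).
  - exact (Derive_comp g (fun t => u x t) y (smooth1_ex_derive _ Hg _) (proj1 (proj2 (Hu x y)))).
Qed.

Lemma smooth_upto_comp n : forall g u, smooth1 g -> smooth u ->
  smooth_upto n (fun x y => g (u x y)).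
Proof.
  induction n; intros g u Hg Hu; pose proof (smooth_pdiff _ Hu).
  - apply smooth_upto0, pdiff_comp; auto.
  - apply smooth_upto_succ; [apply pdiff_comp; auto|].
    intro b. rewrite partial_comp by auto.
    apply smooth_upto_mult; [apply IHn; auto using smooth1_Derive|].
    apply smooth_iff_upto, smooth_partial, Hu.
Qed.

Lemma smooth_comp g u : smooth1 g -> smooth u -> smooth (fun x y => g (u x y)).
Proof. intros; apply smooth_iff_upto; intro; apply smooth_upto_comp; auto. Qed.

Lemma pdiff_inv g : pdiff g -> (forall x y, g x y <> 0) -> pdiff (fun x y => / g x y).
Proof.
  intros Hg Hn x y. destruct (Hg x y) as [gx [gy gc]]. split; [|split].
  - apply (ex_derive_inv (fun t => g t y)); auto.
  - apply (ex_derive_inv (fun t => g x t)); auto.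
  - apply (continuous_comp (fun p : R * R => g (fst p) (snd p)) Rinv); auto.
    apply continuous_Rinv, Hn.
Qed.

Lemma partial_inv b g : pdiff g -> (forall x y, g x y <> 0) ->
  partial b (fun x y => / g x y) =
  (fun x y => (-1 * partial b g x y) * (/ g x y * / g x y)).
Proof.
  intros Hg Hn. destruct b; apply functional_extensionality; intro x;
    apply functional_extensionality; intro y; simpl.
  - rewrite (Derive_inv (fun t => g t y) x (proj1 (Hg x y)) (Hn x y)). field. apply Hn.
  - rewrite (Derive_inv (fun t => g x t) y (proj1 (proj2 (Hg x y))) (Hn x y)). field. apply Hn.
Qed.

Lemma smooth_upto_inv n : forall g, smooth_upto n g -> (forall x y, g x y <> 0) ->
  smooth_upto n (fun x y => / g x y).
Proof.
  induction n; intros g Hg Hn; pose proof (smooth_upto_pdiff _ _ Hg).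
  - apply smooth_upto0, pdiff_inv; auto.
  - apply smooth_upto_succ; [apply pdiff_inv; auto|].
    intro b. rewrite partial_inv by auto.
    assert (Hg' : smooth_upto n g) by (apply smooth_upto_weaken, Hg).
    apply smooth_upto_mult; apply smooth_upto_mult.
    + apply smooth_upto_const.
    + apply smooth_upto_partial, Hg.
    + apply IHn; auto.
    + apply IHn; auto.
Qed.

Lemma smooth_inv g : smooth g -> (forall x y, g x y <> 0) -> smooth (fun x y => / g x y).
Proof. rewrite !smooth_iff_upto; intros; apply smooth_upto_inv; auto. Qed.

Lemma pdiff_lift g : (forall x, ex_derive g x) -> pdiff (fun x (_ : R) => g x).
Proof.
  intros Hg x y. split; [|split].
  - apply Hg.
  - exact (ex_derive_const (K := R_AbsRing) (V := R_NormedModule) (g x) y).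
  - apply (continuous_comp (fun p : R * R => fst p) g); [apply continuous_fst|].
    apply (ex_derive_continuous (K := R_AbsRing) (V := R_NormedModule)), Hg.
Qed.

Lemma smooth1_of_Derive_closed (P : (R -> R) -> Prop) :
  (forall g, P g -> (forall x, ex_derive g x) /\ P (Derive g)) ->
  forall g, P g -> smooth1 g.
Proof.
  intros HP g Pg. apply smooth_iff_upto. intro n. revert g Pg.
  induction n; intros g Pg; destruct (HP g Pg) as [Hg PDg].
  - apply smooth_upto0, pdiff_lift, Hg.
  - apply smooth_upto_succ; [apply pdiff_lift, Hg|]. intros [|].
    + exact (IHn (Derive g) PDg).
    + replace (partial false (fun x (_ : R) => g x)) with (fun _ _ : R => 0);
        [apply smooth_upto_const|].
      do 2 (apply functional_extensionality; intro); simpl; symmetry; apply Derive_const.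
Qed.

Lemma locally_gt a t : a < t -> locally t (fun s => a < s).
Proof.
  intros Ht. assert (H : 0 < t - a) by lra. exists (mkposreal _ H). intros s Hs.
  change (Rabs (s - t) < t - a) in Hs. apply Rabs_def2 in Hs. lra.
Qed.

Lemma locally_lt a t : t < a -> locally t (fun s => s < a).
Proof.
  intros Ht. assert (H : 0 < a - t) by lra. exists (mkposreal _ H). intros s Hs.
  change (Rabs (s - t) < a - t) in Hs. apply Rabs_def2 in Hs. lra.
Qed.

(* Every derivative of [flat j] is a linear combination of [flat k]'s ([flat_span]); this is
   how smoothness across [0] is obtained. *)
Definition flat (j : nat) (t : R) : R := if Rle_dec t 0 then 0 else / t ^ j * exp (- / t).

Lemma flat_ge0 j t : 0 <= flat j t.
Proof.
  unfold flat; destruct (Rle_dec t 0); [lra|].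
  apply Rmult_le_pos; [apply Rlt_le, Rinv_0_lt_compat, pow_lt; lra | apply Rlt_le, exp_pos].
Qed.

Lemma flat_gt0 j t : 0 < t -> 0 < flat j t.
Proof.
  intros Ht; unfold flat; destruct (Rle_dec t 0); [lra|].
  apply Rmult_lt_0_compat; [apply Rinv_0_lt_compat, pow_lt; lra | apply exp_pos].
Qed.

Lemma flat_eq0 j t : t <= 0 -> flat j t = 0.
Proof. intros Ht; unfold flat; destruct (Rle_dec t 0); [reflexivity | lra]. Qed.

Lemma exp_INR_mult n x : exp (INR n * x) = exp x ^ n.
Proof.
  induction n; [simpl; rewrite Rmult_0_l; apply exp_0|].
  rewrite S_INR, Rmult_plus_distr_r, Rmult_1_l, exp_plus, IHn. simpl. ring.
Qed.

Lemma pow_le_exp n u : 0 <= u -> u ^ S n <= INR (S n) ^ S n * exp u.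
Proof.
  intros Hu. set (m := INR (S n)). assert (Hm : 0 < m) by (apply lt_0_INR; lia).
  replace (exp u) with (exp (u / m) ^ S n)
    by (rewrite <- exp_INR_mult; f_equal; fold m; field; lra).
  rewrite <- Rpow_mult_distr. apply pow_incr. split; [exact Hu|].
  assert (H1 : u / m <= exp (u / m)).
  { destruct (Req_dec (u / m) 0) as [E|E]; [rewrite E, exp_0; lra|].
    pose proof (exp_ineq1 (u / m) E). lra. }
  replace u with (m * (u / m)) at 1 by (field; lra).
  apply Rmult_le_compat_l; lra.
Qed.

Lemma flat_le j t : 0 < t -> flat j t <= INR (S j) ^ S j * t.
Proof.
  intros Ht. unfold flat; destruct (Rle_dec t 0); [lra|].
  set (u := / t). assert (Hu : 0 < u) by (apply Rinv_0_lt_compat; lra).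
  replace (/ t ^ j) with (u ^ j) by (unfold u; rewrite pow_inv; reflexivity).
  rewrite exp_Ropp. pose proof (pow_le_exp j u (Rlt_le _ _ Hu)). pose proof (exp_pos u).
  replace t with (/ u) by (unfold u; field; lra).
  apply Rmult_le_reg_r with (exp u * u); [apply Rmult_lt_0_compat; lra|].
  replace (u ^ j * / exp u * (exp u * u)) with (u ^ S j) by (simpl; field; lra).
  replace (INR (S j) ^ S j * / u * (exp u * u)) with (INR (S j) ^ S j * exp u) by (field; lra).
  assumption.
Qed.

Lemma is_derive_flat0 j : is_derive (flat j) 0 0.
Proof.
  apply is_derive_Reals. intros eps Heps.
  set (K := INR (S (S j)) ^ S (S j)).
  assert (HK : 0 < K) by (apply pow_lt, lt_0_INR; lia).
  assert (Hd : 0 < eps / K) by (apply Rdiv_lt_0_compat; lra).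
  exists (mkposreal _ Hd). intros h Hh Hhd. simpl in Hhd.
  rewrite Rplus_0_l, (flat_eq0 j 0) by lra.
  destruct (Rle_dec h 0).
  - rewrite flat_eq0 by lra. replace ((0 - 0) / h - 0) with 0 by (field; lra).
    rewrite Rabs_R0; lra.
  - replace ((flat j h - 0) / h - 0) with (flat (S j) h).
    2:{ unfold flat; destruct (Rle_dec h 0); [lra|]. simpl. field.
        split; [apply pow_nonzero|]; lra. }
    rewrite Rabs_pos_eq by apply flat_ge0. rewrite Rabs_pos_eq in Hhd by lra.
    apply Rle_lt_trans with (K * h); [apply flat_le; lra|].
    apply Rmult_lt_reg_r with (/ K); [apply Rinv_0_lt_compat; lra|].
    replace (K * h * / K) with h by (field; lra). exact Hhd.
Qed.

Lemma is_derive_flat j t : is_derive (flat j) t (- INR j * flat (S j) t + flat (S (S j)) t).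
Proof.
  destruct (Rtotal_order t 0) as [Ht | [Ht | Ht]].
  - apply is_derive_ext_loc with (fun _ => 0).
    + generalize (locally_lt 0 t Ht). apply filter_imp. intros s Hs.
      symmetry; apply flat_eq0; lra.
    + rewrite !flat_eq0 by lra. replace (- INR j * 0 + 0) with 0 by ring.
      apply is_derive_Reals, derivable_pt_lim_const.
  - subst t. rewrite !flat_eq0 by lra. replace (- INR j * 0 + 0) with 0 by ring.
    apply is_derive_flat0.
  - apply is_derive_ext_loc with (fun s => / s ^ j * exp (- / s)).
    + generalize (locally_gt 0 t Ht). apply filter_imp. intros s Hs. unfold flat.
      destruct (Rle_dec s 0); [lra | reflexivity].
    + unfold flat; destruct (Rle_dec t 0); [lra|].
      assert (Hj : t ^ j <> 0) by (apply pow_nonzero; lra).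
      auto_derive; [repeat split; auto; lra|].
      destruct j; [simpl; field; lra|].
      rewrite S_INR. simpl (Init.Nat.pred _). simpl (t ^ S _) in *. field.
      split; [apply pow_nonzero|]; lra.
Qed.

Inductive flat_span : (R -> R) -> Prop :=
| flat_span_flat j : flat_span (flat j)
| flat_span_plus f g : flat_span f -> flat_span g -> flat_span (fun t => f t + g t)
| flat_span_scal c f : flat_span f -> flat_span (fun t => c * f t).

Lemma flat_span_Derive g : flat_span g -> (forall x, ex_derive g x) /\ flat_span (Derive g).
Proof.
  induction 1 as [j | f g _ [Hf DHf] _ [Hg DHg] | c f _ [Hf DHf]].
  - split; [intro x; eexists; apply is_derive_flat|].
    replace (Derive (flat j)) with (fun t => - INR j * flat (S j) t + flat (S (S j)) t).
    + apply flat_span_plus; [apply flat_span_scal|]; apply flat_span_flat.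
    + apply functional_extensionality; intro t. symmetry.
      apply is_derive_unique, is_derive_flat.
  - split; [intro x; apply (ex_derive_plus f g); auto|].
    replace (Derive (fun t => f t + g t)) with (fun t => Derive f t + Derive g t).
    + apply flat_span_plus; auto.
    + apply functional_extensionality; intro t. symmetry. apply Derive_plus; auto.
  - split; [intro x; apply ex_derive_scal; auto|].
    replace (Derive (fun t => c * f t)) with (fun t => c * Derive f t).
    + apply flat_span_scal; auto.
    + apply functional_extensionality; intro t. symmetry. apply Derive_scal.
Qed.

Lemma smooth1_flat j : smooth1 (flat j).
Proof. apply (smooth1_of_Derive_closed flat_span flat_span_Derive), flat_span_flat. Qed.

Definition cutoff (s : R) : R := flat 0 (2 - s) / (flat 0 (2 - s) + flat 0 (s - 1)).

Lemma cutoff_den_gt0 s : 0 < flat 0 (2 - s) + flat 0 (s - 1).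
Proof.
  pose proof (flat_ge0 0 (2 - s)); pose proof (flat_ge0 0 (s - 1)).
  destruct (Rlt_dec s 2).
  - pose proof (flat_gt0 0 (2 - s)); lra.
  - pose proof (flat_gt0 0 (s - 1)); lra.
Qed.

Lemma smooth1_cutoff : smooth1 cutoff.
Proof.
  assert (H1 : smooth (fun x (_ : R) => flat 0 (2 - x))).
  { apply (smooth_comp (flat 0) (fun x _ => 2 - x)); [apply smooth1_flat|].
    exact (smooth_minus (fun _ _ => 2) (coord true) (smooth_const 2) (smooth_coord true)). }
  assert (H2 : smooth (fun x (_ : R) => flat 0 (x - 1))).
  { apply (smooth_comp (flat 0) (fun x _ => x - 1)); [apply smooth1_flat|].
    exact (smooth_minus (coord true) (fun _ _ => 1) (smooth_coord true) (smooth_const 1)). }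
  unfold smooth1, cutoff, Rdiv.
  apply (smooth_mult (fun x _ => flat 0 (2 - x))
                     (fun x _ => / (flat 0 (2 - x) + flat 0 (x - 1)))); [exact H1|].
  apply (smooth_inv (fun x _ => flat 0 (2 - x) + flat 0 (x - 1))).
  - apply (smooth_plus (fun x _ => flat 0 (2 - x)) (fun x _ => flat 0 (x - 1))); assumption.
  - intros x _. pose proof (cutoff_den_gt0 x). lra.
Qed.

Lemma cutoff_eq1 s : s <= 1 -> cutoff s = 1.
Proof.
  intros Hs. unfold cutoff. rewrite (flat_eq0 0 (s - 1)), Rplus_0_r by lra.
  apply Rdiv_diag. pose proof (flat_gt0 0 (2 - s)). lra.
Qed.

Lemma cutoff_eq0 s : 2 <= s -> cutoff s = 0.
Proof. intros Hs. unfold cutoff. rewrite flat_eq0 by lra. unfold Rdiv; ring. Qed.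

Lemma cutoff_range s : 0 <= cutoff s <= 1.
Proof.
  unfold cutoff. pose proof (cutoff_den_gt0 s).
  pose proof (flat_ge0 0 (2 - s)); pose proof (flat_ge0 0 (s - 1)). split.
  - apply Rdiv_le_0_compat; lra.
  - apply Rle_div_l; lra.
Qed.

Lemma Derive_cutoff_eq0 s : 2 < s -> Derive cutoff s = 0.
Proof.
  intros Hs. rewrite (Derive_ext_loc cutoff (fun _ => 0)); [apply Derive_const|].
  generalize (locally_gt 2 s Hs). apply filter_imp. intros t Ht. apply cutoff_eq0; lra.
Qed.

Lemma Derive2_cutoff_eq0 s : 2 < s -> Derive (Derive cutoff) s = 0.
Proof.
  intros Hs. rewrite (Derive_ext_loc (Derive cutoff) (fun _ => 0)); [apply Derive_const|].
  generalize (locally_gt 2 s Hs). apply filter_imp. intros t Ht. apply Derive_cutoff_eq0; lra.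
Qed.

Lemma continuous_bounded_on (f : R -> R) a b : (forall x, continuous f x) ->
  exists A, 0 <= A /\ forall s, a <= s <= b -> Rabs (f s) <= A.
Proof.
  intros Hc. destruct (bounded_continuity (K := R_AbsRing) (V := R_NormedModule) f a b)
    as [M HM]; [intros x _; apply Hc|].
  exists (Rabs M). split; [apply Rabs_pos|]. intros s Hs. specialize (HM s Hs).
  change (Rabs (f s) < M) in HM. pose proof (Rle_abs M). lra.
Qed.

Lemma cutoff_derive_bounds : exists A1 A2, 0 <= A1 /\ 0 <= A2 /\ forall s, 0 <= s ->
  Rabs (Derive cutoff s) <= A1 /\ Rabs (Derive (Derive cutoff) s) <= A2.
Proof.
  destruct (continuous_bounded_on (Derive cutoff) 0 2) as [A1 [HA1 H1]].
  { apply smooth1_continuous, smooth1_Derive, smooth1_cutoff. }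
  destruct (continuous_bounded_on (Derive (Derive cutoff)) 0 2) as [A2 [HA2 H2]].
  { apply smooth1_continuous, smooth1_Derive, smooth1_Derive, smooth1_cutoff. }
  exists A1, A2. do 2 (split; [assumption|]). intros s Hs.
  destruct (Rle_dec s 2).
  - split; [apply H1 | apply H2]; lra.
  - rewrite Derive_cutoff_eq0, Derive2_cutoff_eq0, Rabs_R0 by lra. lra.
Qed.

Lemma pd_plus l : forall f g, smooth f -> smooth g ->
  pd l (fun x y => f x y + g x y) = (fun x y => pd l f x y + pd l g x y).
Proof.
  induction l as [|b l IH]; intros f g Hf Hg; [reflexivity|].
  simpl. rewrite IH by assumption. apply partial_plus; apply smooth_pdiff_pd; assumption.
Qed.

Lemma pd_scal l : forall a f, pd l (fun x y => a * f x y) = (fun x y => a * pd l f x y).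
Proof.
  induction l as [|b l IH]; intros a f; [reflexivity|].
  simpl. rewrite IH. destruct b; apply functional_extensionality; intro x;
    apply functional_extensionality; intro y; apply Derive_scal.
Qed.

Lemma pd_const l b c : pd (b :: l) (fun _ _ => c) = (fun _ _ => 0).
Proof.
  revert b. induction l as [|b' l IH]; intro b; [exact (partial_const b c)|].
  change (partial b (pd (b' :: l) (fun _ _ => c)) = (fun _ _ => 0)).
  rewrite IH. apply partial_const.
Qed.

Lemma pd1_mult b f g x y : smooth f -> smooth g ->
  pd (b :: nil) (fun x y => f x y * g x y) x y =
  pd (b :: nil) f x y * g x y + f x y * pd (b :: nil) g x y.
Proof.
  intros Hf Hg. simpl. rewrite partial_mult by (apply smooth_pdiff; assumption). reflexivity.
Qed.

Lemma pd2_mult b1 b2 f g x y : smooth f -> smooth g ->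
  pd (b2 :: b1 :: nil) (fun x y => f x y * g x y) x y =
  pd (b2 :: b1 :: nil) f x y * g x y + pd (b1 :: nil) f x y * pd (b2 :: nil) g x y +
  pd (b2 :: nil) f x y * pd (b1 :: nil) g x y + f x y * pd (b2 :: b1 :: nil) g x y.
Proof.
  intros Hf Hg. pose proof (smooth_pdiff _ Hf). pose proof (smooth_pdiff _ Hg).
  pose proof (smooth_pdiff _ (smooth_partial b1 _ Hf)).
  pose proof (smooth_pdiff _ (smooth_partial b1 _ Hg)).
  simpl. rewrite (partial_mult b1 f g) by assumption.
  rewrite (partial_plus b2 (fun x y => partial b1 f x y * g x y)
                           (fun x y => f x y * partial b1 g x y)) by (apply pdiff_mult; assumption).
  rewrite (partial_mult b2 (partial b1 f) g), (partial_mult b2 f (partial b1 g)) by assumption.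
  ring.
Qed.

Lemma pd1_comp b g u x y : smooth1 g -> smooth u ->
  pd (b :: nil) (fun x y => g (u x y)) x y = Derive g (u x y) * pd (b :: nil) u x y.
Proof. intros Hg Hu. simpl. rewrite partial_comp by (auto using smooth_pdiff). reflexivity. Qed.

Lemma pd2_comp b1 b2 g u x y : smooth1 g -> smooth u ->
  pd (b2 :: b1 :: nil) (fun x y => g (u x y)) x y =
  Derive (Derive g) (u x y) * pd (b2 :: nil) u x y * pd (b1 :: nil) u x y +
  Derive g (u x y) * pd (b2 :: b1 :: nil) u x y.
Proof.
  intros Hg Hu. pose proof (smooth_pdiff _ Hu). simpl.
  rewrite (partial_comp b1 g u) by assumption.
  rewrite (partial_mult b2 (fun x y => Derive g (u x y)) (partial b1 u)).
  - rewrite (partial_comp b2 (Derive g) u) by (auto using smooth1_Derive). reflexivity.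
  - apply pdiff_comp; auto using smooth1_Derive.
  - apply smooth_pdiff, smooth_partial, Hu.
Qed.

Lemma smooth_norm2 : smooth norm2.
Proof.
  apply (smooth_ext (fun x y => coord true x y * coord true x y +
                                coord false x y * coord false x y));
    [intros; unfold norm2, coord; ring|].
  apply smooth_plus; apply smooth_mult; apply smooth_coord.
Qed.

Lemma partial_norm2 b : partial b norm2 = (fun x y => 2 * coord b x y).
Proof.
  destruct b; apply functional_extensionality; intro x; apply functional_extensionality; intro y;
    unfold norm2, coord; apply is_derive_unique; auto_derive; auto; ring.
Qed.

Lemma pd1_norm2 b x y : pd (b :: nil) norm2 x y = 2 * coord b x y.
Proof. simpl. rewrite partial_norm2. reflexivity. Qed.

Lemma pd2_norm2 b1 b2 x y : pd (b2 :: b1 :: nil) norm2 x y = if Bool.eqb b1 b2 then 2 else 0.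
Proof.
  simpl. rewrite partial_norm2.
  destruct b1, b2; simpl; unfold coord; apply is_derive_unique; auto_derive; auto; ring.
Qed.

Lemma continuous_locally_lt (f : R -> R) x a : continuous f x -> f x < a ->
  locally x (fun t => f t < a).
Proof.
  intros Hc Hx. assert (H : 0 < a - f x) by lra.
  generalize (proj1 (filterlim_locally _ _) Hc (mkposreal _ H)). apply filter_imp.
  intros t Ht. change (Rabs (f t - f x) < a - f x) in Ht. apply Rabs_def2 in Ht. lra.
Qed.

Lemma pd_eq_on_disc f h l : (forall x y, norm2 x y < 1 -> f x y = h x y) ->
  forall x y, norm2 x y < 1 -> pd l f x y = pd l h x y.
Proof.
  intros Hfh. induction l as [|b l IH]; intros x y Hxy; [auto|].
  destruct b; simpl; apply Derive_ext_loc.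
  - apply (filter_imp (fun t => norm2 t y < 1)); [intros t Ht; apply IH, Ht|].
    apply (continuous_locally_lt (fun t => norm2 t y)); [|exact Hxy].
    apply (ex_derive_continuous (K := R_AbsRing) (V := R_NormedModule)).
    unfold norm2; auto_derive; auto.
  - apply (filter_imp (fun t => norm2 x t < 1)); [intros t Ht; apply IH, Ht|].
    apply (continuous_locally_lt (fun t => norm2 x t)); [|exact Hxy].
    apply (ex_derive_continuous (K := R_AbsRing) (V := R_NormedModule)).
    unfold norm2; auto_derive; auto.
Qed.

Definition near0 (P : R -> R -> Prop) : Prop :=
  exists d, 0 < d /\ forall x y, Rabs x < d -> Rabs y < d -> P x y.

Lemma near0_and P Q : near0 P -> near0 Q -> near0 (fun x y => P x y /\ Q x y).
Proof.
  intros [d1 [Hd1 H1]] [d2 [Hd2 H2]]. exists (Rmin d1 d2). split; [apply Rmin_pos; assumption|].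
  pose proof (Rmin_l d1 d2); pose proof (Rmin_r d1 d2).
  intros x y Hx Hy. split; [apply H1 | apply H2]; lra.
Qed.

Lemma continuous_near0 (F : R -> R -> R) :
  continuous (fun p : R * R => F (fst p) (snd p)) (0, 0) -> F 0 0 = 0 ->
  forall t, 0 < t -> near0 (fun x y => Rabs (F x y) <= t).
Proof.
  intros Hc H0 t Ht. destruct (proj1 (filterlim_locally _ _) Hc (mkposreal t Ht)) as [d Hd].
  exists d. split; [apply cond_pos|]. intros x y Hx Hy.
  rewrite <- (Rminus_0_r x) in Hx. rewrite <- (Rminus_0_r y) in Hy.
  specialize (Hd (x, y) (conj Hx Hy)). change (Rabs (F x y - F 0 0) < t) in Hd.
  rewrite H0, Rminus_0_r in Hd. lra.
Qed.

Lemma continuous_eq0_of_approx (F : R -> R -> R) :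
  continuous (fun p : R * R => F (fst p) (snd p)) (0, 0) ->
  (forall e d, 0 < e -> 0 < d -> exists x y, Rabs x < d /\ Rabs y < d /\ Rabs (F x y) <= e) ->
  F 0 0 = 0.
Proof.
  intros Hc Ha. destruct (Req_dec (F 0 0) 0) as [H|H]; [assumption|]. exfalso.
  set (G := fun x y => F x y - F 0 0).
  assert (Hp : 0 < Rabs (F 0 0) / 3) by (pose proof (Rabs_pos_lt _ H); lra).
  destruct (continuous_near0 G) with (t := Rabs (F 0 0) / 3) as [d [Hd Hnear]]; auto.
  - apply (continuous_minus (fun p : R * R => F (fst p) (snd p)) (fun _ => F 0 0));
      [exact Hc | apply continuous_const].
  - unfold G; ring.
  - destruct (Ha _ d Hp Hd) as [x [y [Hx [Hy HF]]]].
    specialize (Hnear x y Hx Hy). unfold G in Hnear.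
    pose proof (Rabs_triang_inv (F 0 0) (F x y)). rewrite Rabs_minus_sym in Hnear. lra.
Qed.

Definition o2_at0 (q : R -> R -> R) : Prop :=
  forall e, 0 < e -> near0 (fun x y => Rabs (q x y) <= e * norm2 x y).

Lemma o2_at0_of_norm2 q :
  (forall e, 0 < e -> exists d, 0 < d /\ forall x y, norm2 x y < d ->
     Rabs (q x y) <= e * norm2 x y) -> o2_at0 q.
Proof.
  intros Hq e He. destruct (Hq e He) as [d [Hd H]].
  exists (Rmin 1 (d / 4)). split; [apply Rmin_pos; lra|].
  pose proof (Rmin_l 1 (d / 4)); pose proof (Rmin_r 1 (d / 4)).
  intros x y Hx Hy. apply H. unfold norm2. rewrite <- (pow2_abs x), <- (pow2_abs y).
  pose proof (Rabs_pos x); pose proof (Rabs_pos y). nra.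
Qed.

Lemma o2_small_square q : o2_at0 q -> forall e d0, 0 < e -> 0 < d0 ->
  exists h, 0 < h /\ h < d0 /\ h <= 1 /\
    forall x y, Rabs x <= h -> Rabs y <= h -> Rabs (q x y) <= e * norm2 x y.
Proof.
  intros Hq e d0 He Hd0. destruct (Hq e He) as [d [Hd H]].
  set (m := Rmin (Rmin d d0) 1).
  assert (Hm : 0 < m /\ m <= d /\ m <= d0 /\ m <= 1).
  { unfold m. pose proof (Rmin_l (Rmin d d0) 1); pose proof (Rmin_r (Rmin d d0) 1).
    pose proof (Rmin_l d d0); pose proof (Rmin_r d d0).
    repeat split; try lra. repeat apply Rmin_pos; lra. }
  exists (m / 2). repeat split; try lra. intros x y Hx Hy. apply H; lra.
Qed.

Lemma is_derive_pd_x f l x y : smooth f ->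
  is_derive (fun t => pd l f t y) x (pd (true :: l) f x y).
Proof. intros Hf. exact (Derive_correct _ _ (proj1 (Hf l x y))). Qed.

Lemma is_derive_pd_y f l x y : smooth f ->
  is_derive (fun t => pd l f x t) y (pd (false :: l) f x y).
Proof. intros Hf. exact (Derive_correct _ _ (proj1 (proj2 (Hf l x y)))). Qed.

Lemma continuous_pd f l x y : smooth f ->
  continuous (fun p : R * R => pd l f (fst p) (snd p)) (x, y).
Proof. intros Hf. exact (proj2 (proj2 (Hf l x y))). Qed.

Section Jet.

Variable q : R -> R -> R.
Hypothesis q_smooth : smooth q.
Hypothesis q_o2 : o2_at0 q.

Lemma o2_value0 : q 0 0 = 0.
Proof.
  destruct (q_o2 1 Rlt_0_1) as [d [Hd H]].
  specialize (H 0 0). rewrite Rabs_R0 in H. specialize (H Hd Hd).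
  unfold norm2 in H. replace (1 * (0 ^ 2 + 0 ^ 2)) with 0 in H by ring.
  apply Rabs_eq_0. pose proof (Rabs_pos (q 0 0)). lra.
Qed.

Lemma o2_dx0 : pd (true :: nil) q 0 0 = 0.
Proof.
  apply continuous_eq0_of_approx; [apply continuous_pd, q_smooth|].
  intros e d He Hd. destruct (o2_small_square q q_o2 e d He Hd) as [h [H0 [H1 [H2 H3]]]].
  destruct (MVT_cor4 (fun t => q t 0) (fun t => pd (true :: nil) q t 0) 0 h)
    with (b := h) as [c [Hc1 Hc2]].
  - intros c _. apply (is_derive_pd_x q nil c 0 q_smooth).
  - rewrite Rminus_0_r, Rabs_pos_eq; lra.
  - rewrite !Rminus_0_r, (Rabs_pos_eq h) in Hc2 by lra.
    rewrite o2_value0, !Rminus_0_r in Hc1.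
    exists c, 0. rewrite Rabs_R0. split; [lra|]. split; [lra|].
    assert (Hb : Rabs (q h 0) <= e * norm2 h 0) by (apply H3; rewrite ?Rabs_R0, ?Rabs_pos_eq; lra).
    rewrite Hc1, Rabs_mult, (Rabs_pos_eq h) in Hb by lra. unfold norm2 in Hb.
    replace (h ^ 2 + 0 ^ 2) with (h * h) in Hb by ring.
    assert (e * (h * h) <= e * h) by (apply Rmult_le_compat_l; nra).
    apply Rmult_le_reg_r with h; lra.
Qed.

Lemma o2_dxx0 : pd (true :: true :: nil) q 0 0 = 0.
Proof.
  apply continuous_eq0_of_approx; [apply continuous_pd, q_smooth|].
  intros e d He Hd. assert (He2 : 0 < e / 2) by lra.
  destruct (o2_small_square q q_o2 (e / 2) d He2 Hd) as [h [H0 [H1 [H2 H3]]]].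
  destruct (Taylor_Lagrange (fun t => q t 0) 1 0 h H0) as [z [Hz Hf]].
  { intros t _ k Hk. destruct k as [|[|[|k]]]; simpl; [trivial | exact (proj1 (q_smooth nil t 0)) |
      exact (proj1 (q_smooth (true :: nil) t 0)) | lia]. }
  exists z, 0. rewrite Rabs_R0, Rabs_pos_eq by lra. split; [lra|]. split; [lra|].
  change (Derive_n (fun t => q t 0) 2 z) with (pd (true :: true :: nil) q z 0) in Hf.
  simpl sum_f_R0 in Hf.
  change (Derive (fun x => q x 0) 0) with (pd (true :: nil) q 0 0) in Hf.
  rewrite o2_dx0, o2_value0 in Hf.
  replace (INR (Factorial.fact 2)) with 2 in Hf by (simpl; ring).
  assert (Hb : Rabs (q h 0) <= e / 2 * norm2 h 0)
    by (apply H3; rewrite ?Rabs_R0, ?Rabs_pos_eq; lra).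
  replace (q h 0) with (h * h / 2 * pd (true :: true :: nil) q z 0) in Hb by (rewrite Hf; field).
  unfold norm2 in Hb. rewrite Rabs_mult, (Rabs_pos_eq (h * h / 2)) in Hb by nra.
  apply Rmult_le_reg_l with (h * h / 2); nra.
Qed.

(* By [Schwarz_aux], [h^2 D_y D_x q(u, v)] is the second difference
   [q(h,h) - q(h,0) - q(0,h) + q(0,0)], which is [o(h^2)]. *)
Lemma o2_dyx0 : pd (false :: true :: nil) q 0 0 = 0.
Proof.
  apply continuous_eq0_of_approx; [apply continuous_pd, q_smooth|].
  intros e d He Hd. assert (He4 : 0 < e / 4) by lra.
  destruct (o2_small_square q q_o2 (e / 4) d He4 Hd) as [h [H0 [H1 [H2 H3]]]].
  destruct (Schwarz_aux q 0 0 (mkposreal 2 Rlt_0_2)) with (h := h) (k := h)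
    as [u [v [Hu [Hv Hs]]]].
  { intros u v _ _. split; [exact (proj1 (q_smooth nil u v))|].
    exact (proj1 (proj2 (q_smooth (true :: nil) u v))). }
  1, 2: simpl; rewrite Rabs_pos_eq; lra.
  rewrite !Rplus_0_l, !Rminus_0_r, (Rabs_pos_eq h) in * by lra.
  change (Derive (fun z => Derive (fun t => q t z) u) v)
    with (pd (false :: true :: nil) q u v) in Hs.
  exists u, v. split; [lra|]. split; [lra|].
  assert (Hhh : Rabs (q h h) <= e / 4 * norm2 h h) by (apply H3; rewrite Rabs_pos_eq; lra).
  assert (Hh0 : Rabs (q h 0) <= e / 4 * norm2 h 0)
    by (apply H3; rewrite ?Rabs_R0, ?Rabs_pos_eq; lra).
  assert (H0h : Rabs (q 0 h) <= e / 4 * norm2 0 h)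
    by (apply H3; rewrite ?Rabs_R0, ?Rabs_pos_eq; lra).
  rewrite o2_value0, Rminus_0_r in Hs. unfold norm2 in *.
  apply Rabs_le_between in Hhh, Hh0, H0h. apply Rabs_le_between.
  assert (Hhp : 0 < h * h) by nra.
  split; apply Rmult_le_reg_l with (h * h); nra.
Qed.

End Jet.

Definition swap (f : R -> R -> R) : R -> R -> R := fun x y => f y x.

Lemma pd_swap l f : pd l (swap f) = swap (pd (map negb l) f).
Proof. induction l as [|b l IH]; [reflexivity|]. simpl. rewrite IH. destruct b; reflexivity. Qed.

Lemma smooth_swap f : smooth f -> smooth (swap f).
Proof.
  intros Hf l x y. rewrite pd_swap. destruct (Hf (map negb l) y x) as [Hx [Hy Hc]].
  split; [exact Hy|]. split; [exact Hx|].
  exact (continuous_comp_2 snd fst (pd (map negb l) f) (x, y)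
           (continuous_snd x y) (continuous_fst x y) Hc).
Qed.

Lemma o2_at0_swap q : o2_at0 q -> o2_at0 (swap q).
Proof.
  intros Hq e He. destruct (Hq e He) as [d [Hd H]]. exists d. split; [exact Hd|].
  intros x y Hx Hy. unfold swap. replace (norm2 x y) with (norm2 y x) by (unfold norm2; ring).
  auto.
Qed.

Lemma o2_jet2_eq0 q : smooth q -> o2_at0 q ->
  forall l, (length l <= 2)%nat -> pd l q 0 0 = 0.
Proof.
  intros Hs Ho l Hl. pose proof (smooth_swap q Hs). pose proof (o2_at0_swap q Ho).
  (* [pd l (swap q) 0 0] is convertible to [pd (map negb l) q 0 0]. *)
  destruct l as [|[|] [|[|] [|b l]]]; simpl in Hl; try lia.
  - apply o2_value0; assumption.
  - apply o2_dx0; assumption.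
  - apply o2_dxx0; assumption.
  - change (pd (false :: true :: nil) (swap q) 0 0 = 0). apply o2_dyx0; assumption.
  - change (pd (true :: nil) (swap q) 0 0 = 0). apply o2_dx0; assumption.
  - apply o2_dyx0; assumption.
  - change (pd (true :: true :: nil) (swap q) 0 0 = 0). apply o2_dxx0; assumption.
Qed.

Lemma abs_sub_le_of_derive_bound f df b K :
  (forall t, Rabs t <= Rabs b -> is_derive f t (df t)) ->
  (forall t, Rabs t <= Rabs b -> Rabs (df t) <= K) -> Rabs (f b - f 0) <= K * Rabs b.
Proof.
  intros Hd Hb. destruct (MVT_cor4 f df 0 (Rabs b)) with (b := b) as [c [Hc1 Hc2]].
  - intros c Hc. apply Hd. rewrite Rminus_0_r in Hc; exact Hc.
  - rewrite Rminus_0_r; lra.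
  - rewrite Hc1, Rminus_0_r, Rabs_mult. rewrite !Rminus_0_r in Hc2.
    apply Rmult_le_compat_r; [apply Rabs_pos | apply Hb; exact Hc2].
Qed.

Lemma abs_le_of_partials g d t : smooth g -> g 0 0 = 0 ->
  (forall b x y, Rabs x < d -> Rabs y < d -> Rabs (pd (b :: nil) g x y) <= t) ->
  forall x y, Rabs x < d -> Rabs y < d -> Rabs (g x y) <= t * (Rabs x + Rabs y).
Proof.
  intros Hg H0 Hb x y Hx Hy.
  assert (Hgx : Rabs (g x 0 - g 0 0) <= t * Rabs x).
  { apply (abs_sub_le_of_derive_bound (fun s => g s 0) (fun s => pd (true :: nil) g s 0)).
    - intros s _. apply (is_derive_pd_x g nil s 0 Hg).
    - intros s Hs. pose proof (Rabs_pos x). apply Hb; rewrite ?Rabs_R0; lra. }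
  assert (Hgy : Rabs (g x y - g x 0) <= t * Rabs y).
  { apply (abs_sub_le_of_derive_bound (fun s => g x s) (fun s => pd (false :: nil) g x s)).
    - intros s _. apply (is_derive_pd_y g nil x s Hg).
    - intros s Hs. apply Hb; lra. }
  rewrite H0, Rminus_0_r in Hgx.
  replace (g x y) with ((g x y - g x 0) + g x 0) by ring.
  eapply Rle_trans; [apply Rabs_triang | lra].
Qed.

Lemma o2_bounds q : smooth q -> o2_at0 q -> forall t, 0 < t ->
  exists d, 0 < d /\ d <= 1 /\ forall x y, Rabs x < d -> Rabs y < d ->
    (forall b1 b2, Rabs (pd (b2 :: b1 :: nil) q x y) <= t) /\
    (forall b, Rabs (pd (b :: nil) q x y) <= t * (Rabs x + Rabs y)) /\
    Rabs (q x y) <= t * norm2 x y.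
Proof.
  intros Hs Ho t Ht.
  pose proof (o2_jet2_eq0 q Hs Ho) as Hjet.
  assert (Hsec : forall b1 b2, near0 (fun x y => Rabs (pd (b2 :: b1 :: nil) q x y) <= t)).
  { intros b1 b2. apply continuous_near0;
      [apply continuous_pd, Hs | apply Hjet; simpl; lia | exact Ht]. }
  destruct (near0_and _ _ (near0_and _ _ (Hsec true true) (Hsec true false))
                          (near0_and _ _ (near0_and _ _ (Hsec false true) (Hsec false false))
                                         (Ho t Ht)))
    as [d [Hd H]].
  assert (Hd1 : 0 < Rmin d 1) by (apply Rmin_pos; lra).
  pose proof (Rmin_l d 1); pose proof (Rmin_r d 1).
  assert (H2 : forall x y, Rabs x < Rmin d 1 -> Rabs y < Rmin d 1 ->
    forall b1 b2, Rabs (pd (b2 :: b1 :: nil) q x y) <= t).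
  { intros x y Hx Hy [|] [|]; destruct (H x y) as [[[]] [[] ]]; auto; lra. }
  exists (Rmin d 1). split; [exact Hd1|]. split; [lra|]. intros x y Hx Hy.
  split; [auto|]. split.
  - intro b. apply (abs_le_of_partials (pd (b :: nil) q) (Rmin d 1));
      [apply smooth_partial, Hs | apply Hjet; simpl; lia | | assumption | assumption].
    intros b' u v Hu Hv. apply (H2 u v Hu Hv b b').
  - apply (H x y); lra.
Qed.

Lemma abs_le_of_pow2_le x r : 0 <= r -> x ^ 2 <= r ^ 2 -> Rabs x <= r.
Proof. intros Hr H. rewrite <- pow2_abs in H. pose proof (Rabs_pos x). nra. Qed.

Lemma abs_mult_le a b A B : Rabs a <= A -> Rabs b <= B -> Rabs (a * b) <= A * B.
Proof. intros Ha Hb. rewrite Rabs_mult. apply Rmult_le_compat; auto; apply Rabs_pos. Qed.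

Lemma Rabs_triang4 a b c d : Rabs (a + b + c + d) <= Rabs a + Rabs b + Rabs c + Rabs d.
Proof.
  eapply Rle_trans; [apply Rabs_triang|]. apply Rplus_le_compat_r.
  eapply Rle_trans; [apply Rabs_triang|]. apply Rplus_le_compat_r. apply Rabs_triang.
Qed.

Lemma abs_coord_le b x y r : Rabs x <= r -> Rabs y <= r -> Rabs (coord b x y) <= r.
Proof. destruct b; simpl; auto. Qed.

Lemma abs_eqb_le b1 b2 : Rabs (if Bool.eqb b1 b2 then 2 else 0) <= 2.
Proof. destruct (Bool.eqb b1 b2); [rewrite Rabs_pos_eq | rewrite Rabs_R0]; lra. Qed.

Section Correction.

Variables (q : R -> R -> R) (tau rho A1 A2 : R).
Hypothesis q_smooth : smooth q.
Hypothesis tau_range : 0 < tau <= 1.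
Hypothesis rho_range : 0 < rho <= 1.
Hypothesis cutoff_bounds : forall s, 0 <= s ->
  Rabs (Derive cutoff s) <= A1 /\ Rabs (Derive (Derive cutoff) s) <= A2.
Hypothesis q_bounds : forall x y, Rabs x <= 2 * rho -> Rabs y <= 2 * rho ->
  (forall b1 b2, Rabs (pd (b2 :: b1 :: nil) q x y) <= tau) /\
  (forall b, Rabs (pd (b :: nil) q x y) <= tau * (Rabs x + Rabs y)) /\
  Rabs (q x y) <= tau * norm2 x y.

Definition scaled (x y : R) : R := / (rho * rho) * norm2 x y.
Definition bump (x y : R) : R := cutoff (scaled x y).
Definition target (x y : R) : R :=
  (1 - tau) * q x y + - tau * norm2 x y + - (tau * (rho * rho)).
Definition correction (x y : R) : R := bump x y * target x y.

Lemma rho2_gt0 : 0 < rho * rho.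
Proof. nra. Qed.

Lemma smooth_scaled : smooth scaled.
Proof. apply (smooth_scal _ norm2), smooth_norm2. Qed.

Lemma smooth_bump : smooth bump.
Proof. exact (smooth_comp cutoff scaled smooth1_cutoff smooth_scaled). Qed.

Lemma smooth_target_lin : smooth (fun x y => (1 - tau) * q x y + - tau * norm2 x y).
Proof.
  apply (smooth_plus (fun x y => (1 - tau) * q x y) (fun x y => - tau * norm2 x y));
    apply smooth_scal; [exact q_smooth | apply smooth_norm2].
Qed.

Lemma smooth_target : smooth target.
Proof.
  apply (smooth_plus _ (fun _ _ => - (tau * (rho * rho))) smooth_target_lin (smooth_const _)).
Qed.

Lemma smooth_correction : smooth correction.
Proof. exact (smooth_mult bump target smooth_bump smooth_target). Qed.

Lemma pd_target b l x y :
  pd (b :: l) target x y = (1 - tau) * pd (b :: l) q x y + - tau * pd (b :: l) norm2 x y.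
Proof.
  unfold target.
  rewrite (pd_plus (b :: l) _ (fun _ _ => - (tau * (rho * rho))) smooth_target_lin
             (smooth_const _)), pd_const, Rplus_0_r.
  rewrite (pd_plus (b :: l) (fun x y => (1 - tau) * q x y) (fun x y => - tau * norm2 x y))
    by (apply smooth_scal; first [exact q_smooth | apply smooth_norm2]).
  rewrite (pd_scal (b :: l) (1 - tau) q), (pd_scal (b :: l) (- tau) norm2). reflexivity.
Qed.

Lemma pd1_scaled b x y : pd (b :: nil) scaled x y = / (rho * rho) * (2 * coord b x y).
Proof. unfold scaled. rewrite (pd_scal (b :: nil)), pd1_norm2. reflexivity. Qed.

Lemma pd2_scaled b1 b2 x y :
  pd (b2 :: b1 :: nil) scaled x y = / (rho * rho) * (if Bool.eqb b1 b2 then 2 else 0).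
Proof. unfold scaled. rewrite (pd_scal (b2 :: b1 :: nil)), pd2_norm2. reflexivity. Qed.

Lemma pd1_bump b x y :
  pd (b :: nil) bump x y = Derive cutoff (scaled x y) * (/ (rho * rho) * (2 * coord b x y)).
Proof.
  unfold bump. rewrite (pd1_comp b cutoff scaled), pd1_scaled;
    auto using smooth1_cutoff, smooth_scaled.
Qed.

Lemma pd2_bump b1 b2 x y : pd (b2 :: b1 :: nil) bump x y =
  Derive (Derive cutoff) (scaled x y) * (/ (rho * rho) * (2 * coord b2 x y)) *
    (/ (rho * rho) * (2 * coord b1 x y)) +
  Derive cutoff (scaled x y) * (/ (rho * rho) * (if Bool.eqb b1 b2 then 2 else 0)).
Proof.
  unfold bump. rewrite (pd2_comp b1 b2 cutoff scaled), !pd1_scaled, pd2_scaled;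
    auto using smooth1_cutoff, smooth_scaled.
Qed.

Lemma scaled_ge0 x y : 0 <= scaled x y.
Proof.
  unfold scaled, norm2. pose proof rho2_gt0.
  apply Rmult_le_pos; [apply Rlt_le, Rinv_0_lt_compat; lra | nra].
Qed.

Lemma scaled_le2 x y : scaled x y <= 2 ->
  Rabs x <= 2 * rho /\ Rabs y <= 2 * rho /\ norm2 x y <= 2 * (rho * rho).
Proof.
  intros H. pose proof rho2_gt0. unfold scaled in H.
  assert (HN : norm2 x y <= 2 * (rho * rho)).
  { apply Rmult_le_reg_l with (/ (rho * rho)); [apply Rinv_0_lt_compat; lra|].
    replace (/ (rho * rho) * (2 * (rho * rho))) with 2 by (field; lra). exact H. }
  unfold norm2 in HN. split; [|split]; [| |exact HN]; apply abs_le_of_pow2_le; nra.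
Qed.

Lemma target_bounds x y : scaled x y <= 2 ->
  Rabs (target x y) <= 5 * tau * (rho * rho) /\
  (forall b, Rabs (pd (b :: nil) target x y) <= 8 * tau * rho) /\
  (forall b1 b2, Rabs (pd (b2 :: b1 :: nil) target x y) <= 3 * tau).
Proof.
  intros Hs. destruct (scaled_le2 x y Hs) as [Hx [Hy HN]].
  destruct (q_bounds x y Hx Hy) as [Q2 [Q1 Q0]].
  assert (Htau : Rabs (1 - tau) <= 1) by (rewrite Rabs_pos_eq; lra).
  assert (Hntau : Rabs (- tau) <= tau) by (rewrite Rabs_Ropp, Rabs_pos_eq; lra).
  pose proof rho2_gt0.
  split; [|split].
  - unfold target.
    assert (Hn0 : 0 <= norm2 x y) by (unfold norm2; nra).
    pose proof (abs_mult_le _ _ _ _ Htau Q0).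
    assert (Hn : Rabs (norm2 x y) <= 2 * (rho * rho)) by (rewrite Rabs_pos_eq; lra).
    pose proof (abs_mult_le _ _ _ _ Hntau Hn).
    assert (Rabs (- (tau * (rho * rho))) <= tau * (rho * rho))
      by (rewrite Rabs_Ropp, Rabs_pos_eq; nra).
    eapply Rle_trans; [apply Rabs_triang|].
    eapply Rle_trans; [apply Rplus_le_compat_r, Rabs_triang|]. nra.
  - intros b. rewrite pd_target, pd1_norm2.
    pose proof (abs_mult_le _ _ _ _ Htau (Q1 b)).
    assert (Hc : Rabs (2 * coord b x y) <= 2 * (2 * rho)).
    { rewrite Rabs_mult, (Rabs_pos_eq 2) by lra.
      apply Rmult_le_compat_l; [lra | apply abs_coord_le; assumption]. }
    pose proof (abs_mult_le _ _ _ _ Hntau Hc).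
    eapply Rle_trans; [apply Rabs_triang|]. nra.
  - intros b1 b2. rewrite pd_target, pd2_norm2.
    pose proof (abs_mult_le _ _ _ _ Htau (Q2 b1 b2)).
    pose proof (abs_mult_le _ _ _ _ Hntau (abs_eqb_le b1 b2)).
    eapply Rle_trans; [apply Rabs_triang|]. nra.
Qed.

Lemma bump_bounds x y : scaled x y <= 2 ->
  Rabs (bump x y) <= 1 /\
  (forall b, Rabs (pd (b :: nil) bump x y) <= 4 * A1 / rho) /\
  (forall b1 b2, Rabs (pd (b2 :: b1 :: nil) bump x y) <= (16 * A2 + 2 * A1) / (rho * rho)).
Proof.
  intros Hs. destruct (scaled_le2 x y Hs) as [Hx [Hy _]].
  destruct (cutoff_bounds (scaled x y) (scaled_ge0 x y)) as [H1 H2].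
  pose proof rho2_gt0.
  assert (Hinv : 0 < / (rho * rho)) by (apply Rinv_0_lt_compat; lra).
  assert (Hc : forall b, Rabs (/ (rho * rho) * (2 * coord b x y)) <= 4 / rho).
  { intro b. rewrite Rabs_mult, Rabs_pos_eq by lra. rewrite Rabs_mult, (Rabs_pos_eq 2) by lra.
    apply Rle_trans with (/ (rho * rho) * (2 * (2 * rho))); [|right; field; lra].
    apply Rmult_le_compat_l; [lra|]. apply Rmult_le_compat_l; [lra|].
    apply abs_coord_le; assumption. }
  assert (Hc2 : forall b1 b2, Rabs (/ (rho * rho) * (if Bool.eqb b1 b2 then 2 else 0))
                              <= / (rho * rho) * 2).
  { intros b1 b2. rewrite Rabs_mult, (Rabs_pos_eq (/ _)) by lra.
    apply Rmult_le_compat_l; [lra | apply abs_eqb_le]. }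
  split; [|split].
  - unfold bump. pose proof (cutoff_range (scaled x y)). rewrite Rabs_pos_eq; lra.
  - intro b. rewrite pd1_bump.
    apply Rle_trans with (A1 * (4 / rho)); [apply abs_mult_le; auto | right; field; lra].
  - intros b1 b2. rewrite pd2_bump.
    pose proof (abs_mult_le _ _ _ _ (abs_mult_le _ _ _ _ H2 (Hc b2)) (Hc b1)).
    pose proof (abs_mult_le _ _ _ _ H1 (Hc2 b1 b2)).
    eapply Rle_trans; [apply Rabs_triang|].
    replace ((16 * A2 + 2 * A1) / (rho * rho))
      with (A2 * (4 / rho) * (4 / rho) + A1 * (/ (rho * rho) * 2)) by (field; lra).
    lra.
Qed.

Lemma correction_derivs_eq0 l x y : (length l <= 2)%nat -> 2 < scaled x y ->
  pd l correction x y = 0.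
Proof.
  intros Hl Hs.
  assert (Z0 : bump x y = 0) by (apply cutoff_eq0; lra).
  assert (Z1 : forall b, pd (b :: nil) bump x y = 0)
    by (intro b; rewrite pd1_bump, Derive_cutoff_eq0 by lra; ring).
  assert (Z2 : forall b1 b2, pd (b2 :: b1 :: nil) bump x y = 0)
    by (intros b1 b2; rewrite pd2_bump, Derive_cutoff_eq0, Derive2_cutoff_eq0 by lra; ring).
  destruct l as [|b1 [|b2 [|b3 l]]]; simpl in Hl; try lia; unfold correction.
  - simpl. rewrite Z0. ring.
  - rewrite (pd1_mult b1 bump target x y smooth_bump smooth_target), Z0, Z1. ring.
  - rewrite (pd2_mult b2 b1 bump target x y smooth_bump smooth_target), Z0, !Z1, Z2. ring.
Qed.

Definition correction_const : R := 80 * A2 + 80 * A1 + 10.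

Lemma correction_bound l x y : (length l <= 2)%nat ->
  Rabs (pd l correction x y) <= correction_const * tau.
Proof.
  intros Hl. unfold correction_const.
  destruct (cutoff_bounds 0 (Rle_refl 0)) as [HA1 HA2].
  pose proof (Rabs_pos (Derive cutoff 0)); pose proof (Rabs_pos (Derive (Derive cutoff) 0)).
  destruct (Rle_dec (scaled x y) 2) as [Hs | Hs].
  2:{ rewrite correction_derivs_eq0, Rabs_R0 by (auto; lra). apply Rmult_le_pos; lra. }
  destruct (bump_bounds x y Hs) as [F0 [F1 F2]], (target_bounds x y Hs) as [G0 [G1 G2]].
  pose proof rho2_gt0. assert (Hr1 : rho * rho <= 1) by nra.
  destruct l as [|b1 [|b2 [|b3 l]]]; simpl in Hl; try lia; unfold correction.
  - simpl. apply Rle_trans with (1 * (5 * tau * (rho * rho))); [apply abs_mult_le; auto|]. nra.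
  - rewrite (pd1_mult b1 bump target x y smooth_bump smooth_target).
    eapply Rle_trans; [apply Rabs_triang|].
    eapply Rle_trans; [apply Rplus_le_compat; apply abs_mult_le; eauto|].
    match goal with |- ?L <= _ => replace L with (tau * rho * (20 * A1 + 8)) by (field; lra) end.
    assert (0 <= tau * (20 * A1 + 8)) by nra. nra.
  - rewrite (pd2_mult b2 b1 bump target x y smooth_bump smooth_target).
    eapply Rle_trans; [apply Rabs_triang4|].
    eapply Rle_trans; [repeat apply Rplus_le_compat; apply abs_mult_le; eauto|].
    match goal with |- ?L <= _ =>
      replace L with (tau * (80 * A2 + 74 * A1 + 3)) by (field; lra) end.
    nra.
Qed.

Lemma correction_eq_target x y : norm2 x y < rho * rho -> correction x y = target x y.
Proof.
  intros H. unfold correction, bump. rewrite cutoff_eq1; [ring|].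
  pose proof rho2_gt0. unfold scaled.
  apply Rmult_le_reg_l with (rho * rho); [lra|].
  rewrite <- Rmult_assoc, Rinv_r, Rmult_1_l by lra. lra.
Qed.

End Correction.

Lemma correction_exists q eps : smooth q -> o2_at0 q -> 0 < eps ->
  exists tau rho, 0 < tau /\ 0 < rho < 1 /\
    smooth (correction q tau rho) /\
    (forall x y, norm2 x y < rho ^ 2 -> correction q tau rho x y = target q tau rho x y) /\
    (forall l x y, (length l <= 2)%nat -> 1 <= norm2 x y -> pd l (correction q tau rho) x y = 0) /\
    (forall l x y, (length l <= 2)%nat ->
       Rabs (pd l (correction q tau rho) x y) <= Rmin eps 1 / 2).
Proof.
  intros Hs Ho Heps.
  destruct cutoff_derive_bounds as [A1 [A2 [HA1 [HA2 HA]]]].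
  set (C := correction_const A1 A2).
  assert (HC : 10 <= C) by (unfold C, correction_const; lra).
  assert (Hm : 0 < Rmin eps 1 <= 1) by (split; [apply Rmin_pos; lra | apply Rmin_r]).
  set (tau := Rmin eps 1 / (2 * C)).
  assert (Htau : 0 < tau <= 1).
  { unfold tau. split; [apply Rdiv_lt_0_compat; lra|]. apply Rle_div_l; lra. }
  assert (HCtau : C * tau = Rmin eps 1 / 2) by (unfold tau; field; lra).
  destruct (o2_bounds q Hs Ho tau (proj1 Htau)) as [d [Hd [Hd1 Hb]]].
  set (rho := d / 4).
  assert (Hrho : 0 < rho <= 1) by (unfold rho; lra).
  assert (Hqb : forall x y, Rabs x <= 2 * rho -> Rabs y <= 2 * rho ->
    (forall b1 b2, Rabs (pd (b2 :: b1 :: nil) q x y) <= tau) /\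
    (forall b, Rabs (pd (b :: nil) q x y) <= tau * (Rabs x + Rabs y)) /\
    Rabs (q x y) <= tau * norm2 x y).
  { intros x y Hx Hy. apply Hb; unfold rho in *; lra. }
  exists tau, rho. split; [lra|]. split; [unfold rho; lra|]. split; [|split; [|split]].
  - apply smooth_correction; assumption.
  - intros x y Hxy. apply correction_eq_target; [lra|].
    replace (rho * rho) with (rho ^ 2) by ring. exact Hxy.
  - intros l x y Hl H1. apply correction_derivs_eq0; auto.
    unfold scaled. assert (Hr : rho * rho <= 1 / 16) by (unfold rho; nra).
    assert (Hr0 : 0 < rho * rho) by nra.
    assert (E : / (rho * rho) * (rho * rho) = 1) by (field; lra).
    assert (0 < / (rho * rho)) by (apply Rinv_0_lt_compat; lra). nra.
  - intros l x y Hl. rewrite <- HCtau.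
    apply (correction_bound q tau rho A1 A2); assumption.
Qed.

Lemma laplacian_plus f g x y : smooth f -> smooth g ->
  laplacian (fun x y => f x y + g x y) x y = laplacian f x y + laplacian g x y.
Proof. intros Hf Hg. unfold laplacian. rewrite !(pd_plus _ f g Hf Hg). ring. Qed.

Lemma laplacian_eq_norm2_on_disc f x y : (forall x y, norm2 x y < 1 -> f x y = norm2 x y) ->
  norm2 x y < 1 -> laplacian f x y = 4.
Proof.
  intros Hf Hxy. unfold laplacian.
  rewrite !(pd_eq_on_disc f norm2 _ Hf x y Hxy), !pd2_norm2. simpl. ring.
Qed.

Theorem mainTheorem10 (phi psi : R -> R -> R) :
  strictly_subharmonic phi ->
  (forall e, 0 < e -> exists d, 0 < d /\ forall x y, norm2 x y < d ->
      Rabs (phi x y - norm2 x y) <= e * norm2 x y) ->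
  strictly_subharmonic psi ->
  S1_invariant psi ->
  (forall x y, norm2 x y < 1 -> psi x y = norm2 x y) ->
  extends_smooth_at_infinity psi ->
  forall eps, 0 < eps ->
  exists (phie : R -> R -> R) (d1 d2 r : R),
    strictly_subharmonic phie /\ 0 < d1 /\ 0 < d2 /\ 0 < r /\
    (forall x y, norm2 x y < r ^ 2 -> phie x y = (1 - d1) * phi x y - d2) /\
    (forall x y, 1 < norm2 x y -> phie x y = psi x y) /\
    C2_norm_lt (fun x y => phie x y - psi x y) eps.
Proof.
  intros [Hphi _] Hphi0 [Hpsi Hpsi_lap] _ Hpsi_disc _ eps Heps.
  set (q := fun x y => phi x y - norm2 x y).
  assert (Hq : smooth q) by (apply smooth_minus; [exact Hphi | exact smooth_norm2]).
  destruct (correction_exists q eps Hq (o2_at0_of_norm2 q Hphi0) Heps)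
    as [tau [rho [Htau [Hrho [Hcorr [Hcorr_in [Hcorr_out Hcorr_small]]]]]]].
  assert (Hmin : Rmin eps 1 <= eps /\ Rmin eps 1 <= 1) by (split; [apply Rmin_l | apply Rmin_r]).
  exists (fun x y => psi x y + correction q tau rho x y), tau, (tau * rho ^ 2), rho.
  split; [|split; [|split; [|split; [|split; [|split]]]]].
  - split; [apply smooth_plus; assumption|]. intros x y.
    rewrite laplacian_plus by assumption.
    destruct (Rlt_dec (norm2 x y) 1) as [Hin | Hout].
    + rewrite laplacian_eq_norm2_on_disc by assumption. unfold laplacian.
      pose proof (Hcorr_small (true :: true :: nil) x y ltac:(simpl; lia)).
      pose proof (Hcorr_small (false :: false :: nil) x y ltac:(simpl; lia)).
      apply Rabs_le_between in H, H0. lra.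
    + unfold laplacian. rewrite !Hcorr_out by (simpl; auto; lra).
      rewrite !Rplus_0_r. apply Hpsi_lap.
  - exact Htau.
  - apply Rmult_lt_0_compat; [exact Htau | apply pow_lt; lra].
  - lra.
  - intros x y Hxy. rewrite Hcorr_in, Hpsi_disc by (auto; nra).
    unfold target, q. ring.
  - intros x y Hxy. pose proof (Hcorr_out nil x y ltac:(simpl; lia) ltac:(lra)) as Hzero.
    simpl in Hzero. rewrite Hzero. ring.
  - exists (Rmin eps 1 / 2). split; [lra|]. intros l x y Hl.
    replace (fun x y => psi x y + correction q tau rho x y - psi x y) with (correction q tau rho)
      by (do 2 (apply functional_extensionality; intro); ring).
    apply Hcorr_small, Hl.
Qed.
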